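(* Let $a<b$ be integers, $\sigma=(\sigma_x)_{x\in[a,b]\cap\mathbb{Z}}$ arbitrary strictly positive deterministic numbers, and $X^{a,b}$ the inhomogeneous CTRW on $[a,b]\cap\mathbb{Z}$ in the trapping landscape $\sigma$. For each $x\in[a,b)\cap\mathbb{Z}$, $z\in[x,b)\cap\mathbb{Z}$ and $t>0$, \[ P^{a,b}_x(\tau_b\le t)\le \frac{t}{2(b-z)\sigma_z}. \] Moreover, for each $x\in(a,b)\cap\mathbb{Z}$ and $t>0$, \[ P^{a,b}_x(\tau\le t)\le\frac{t}{\min\{x-a,b-x\}\,\sigma_x}. \]
   Context: For integers $a<b$ and positive numbers $(\sigma_x)_{x\in[a,b]\cap\mathbb{Z}}$, the inhomogeneous CTRW $X^{a,b}$ on $[a,b]\cap\mathbb{Z}$ in the trapping landscape $\sigma$ is the continuous-time Markov chain on $[a,b]\cap\mathbb{Z}$ which jumps from $x$ to each nearest neighbour $y$ of $x$ within $[a,b]\cap\mathbb{Z}$ at rate $1/(2\sigma_x)$ (reflecting at $a$ and $b$). $P^{a,b}_x$ is its law started from $x$. $\tau_a:=\inf\{s:X^{a,b}_s=a\}$, $\tau_b:=\inf\{s:X^{a,b}_s=b\}$, $\tau:=\min\{\tau_a,\tau_b\}$. *)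

From Stdlib Require Import Reals ZArith.
Open Scope R_scope.

Definition sumZ (a b : Z) (f : Z -> R) : R :=
  if Z.ltb b a then 0
  else sum_f_R0 (fun k => f (a + Z.of_nat k)%Z) (Z.to_nat (b - a)).

Definition inI (a b x : Z) : bool := (Z.leb a x && Z.leb x b)%bool.

(* Generator of the inhomogeneous CTRW on [a,b] ∩ Z in the trapping
   landscape sigma (rate 1/(2 sigma_x) to each nearest neighbour inside
   [a,b]), with the states of the set [absorb] made absorbing
   (i.e. the chain stopped upon hitting [absorb]). *)
Definition gen (a b : Z) (sigma : Z -> R) (absorb : Z -> bool) (x y : Z) : R :=
  if absorb x then 0
  else if (inI a b y && (Z.abs (x - y) =? 1)%Z)%bool then / (2 * sigma x)
  else if Z.eqb x y then
    - ((if inI a b (x - 1) then 1 else 0) + (if inI a b (x + 1) then 1 else 0))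
      / (2 * sigma x)
  else 0.

Fixpoint genpow (a b : Z) (sigma : Z -> R) (absorb : Z -> bool) (n : nat)
  (x y : Z) : R :=
  match n with
  | O => if Z.eqb x y then 1 else 0
  | S m => sumZ a b (fun z => gen a b sigma absorb x z * genpow a b sigma absorb m z y)
  end.

(* [hit_prob a b sigma A t x l] : l is P^{a,b}_x(tau_A <= t), where tau_A is
   the hitting time of the set A; it is the probability that the chain
   stopped at A is in A at time t, i.e. the sum over y in A of the
   (x,y) entry of the transition matrix exp(t Q_A) = sum_n t^n Q_A^n / n!. *)
Definition hit_prob (a b : Z) (sigma : Z -> R) (absorb : Z -> bool) (t : R)
  (x : Z) (l : R) : Prop :=
  infinite_sum
    (fun n => t ^ n / INR (fact n) *
       sumZ a b (fun y => if absorb y then genpow a b sigma absorb n x y else 0))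
    l.

(* tau_b and tau = min(tau_a, tau_b). *)
Definition at_b (b : Z) : Z -> bool := fun y => Z.eqb y b.
Definition at_ab (a b : Z) : Z -> bool := fun y => (Z.eqb y a || Z.eqb y b)%bool.

From Stdlib Require Import Reals ZArith Lia Lra.
From Coquelicot Require Import Coquelicot.
Open Scope R_scope.

(* Let Q be the generator of the stopped chain and lam >= max_y 1/sigma_y (we take
   lam = sum_y 1/sigma_y).  Then B = Q + lam is a positive operator and, as power
   series, exp(tQ) = e^(-lam t) exp(tB), so exp(tQ) is positive.  If phi >= 0
   vanishes at x, phi >= c on the absorbing set and Q phi <= G, then
   B^k phi <= lam^k phi + k lam^(k-1) G, and summing the series gives
   c P_x(tau_A <= t) <= (exp(tQ) phi)(x) <= t G.  The two bounds come from
   phi(w) = (w - z)^+, c = b - z, G = 1/(2 sigma_z), and from phi(w) = |w - x|,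
   c = min(x - a, b - x), G = 1/sigma_x. *)

Lemma sum_f_R0_swap (F : nat -> nat -> R) (m n : nat) :
  sum_f_R0 (fun i => sum_f_R0 (fun j => F i j) m) n =
  sum_f_R0 (fun j => sum_f_R0 (fun i => F i j) n) m.
Proof.
  induction n as [|n IH]; simpl; [reflexivity|].
  rewrite IH, <- plus_sum. reflexivity.
Qed.

Lemma sum_f_R0_delta (k0 N : nat) (v : R) :
  sum_f_R0 (fun k => if Nat.eqb k k0 then v else 0) N =
  if Nat.leb k0 N then v else 0.
Proof.
  induction N as [|N IH]; [destruct k0; reflexivity|].
  rewrite tech5, IH.
  destruct (Nat.leb_spec k0 N), (Nat.eqb_spec (S N) k0), (Nat.leb_spec k0 (S N));
    lia || ring.
Qed.

Lemma inI_spec a b y : inI a b y = true <-> (a <= y <= b)%Z.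
Proof. unfold inI; rewrite Bool.andb_true_iff, !Z.leb_le; reflexivity. Qed.

Section SumZ.
Variables a b : Z.

Lemma sumZ_ext f g : (forall z, (a <= z <= b)%Z -> f z = g z) -> sumZ a b f = sumZ a b g.
Proof.
  intros E; unfold sumZ; destruct (Z.ltb_spec b a); [reflexivity|].
  apply sum_eq; intros k Hk; apply E; lia.
Qed.

Lemma sumZ_plus f g : sumZ a b (fun z => f z + g z) = sumZ a b f + sumZ a b g.
Proof. unfold sumZ; destruct (b <? a)%Z; [ring | apply plus_sum]. Qed.

Lemma sumZ_scal c f : sumZ a b (fun z => c * f z) = c * sumZ a b f.
Proof.
  unfold sumZ; destruct (b <? a)%Z; [ring|].
  rewrite scal_sum; apply sum_eq; intros; ring.
Qed.

Lemma sumZ_le f g : (forall z, (a <= z <= b)%Z -> f z <= g z) -> sumZ a b f <= sumZ a b g.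
Proof.
  intros E; unfold sumZ; destruct (Z.ltb_spec b a); [lra|].
  apply sum_Rle; intros k Hk; apply E; lia.
Qed.

Lemma sumZ_swap (F : Z -> Z -> R) :
  sumZ a b (fun y => sumZ a b (fun z => F y z)) =
  sumZ a b (fun z => sumZ a b (fun y => F y z)).
Proof.
  unfold sumZ; destruct (b <? a)%Z; [reflexivity|].
  apply sum_f_R0_swap.
Qed.

Lemma sumZ_delta w h :
  sumZ a b (fun z => if Z.eqb z w then h z else 0) = if inI a b w then h w else 0.
Proof.
  destruct (inI a b w) eqn:Hw.
  - apply inI_spec in Hw; unfold sumZ; destruct (Z.ltb_spec b a); [lia|].
    rewrite (sum_eq _ (fun k => if Nat.eqb k (Z.to_nat (w - a)) then h w else 0)).
    + rewrite sum_f_R0_delta.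
      destruct (Nat.leb_spec (Z.to_nat (w - a)) (Z.to_nat (b - a))); [reflexivity | lia].
    + intros k _; destruct (Z.eqb_spec (a + Z.of_nat k) w), (Nat.eqb_spec k (Z.to_nat (w - a)));
        [subst; reflexivity | lia | lia | reflexivity].
  - rewrite (sumZ_ext _ (fun _ => 0 * 0)), sumZ_scal; [ring|].
    intros z Hz; destruct (Z.eqb_spec z w); [|ring].
    subst; apply (proj2 (inI_spec a b w)) in Hz; congruence.
Qed.

Lemma sumZ_ge_term f y : (forall z, (a <= z <= b)%Z -> 0 <= f z) -> (a <= y <= b)%Z ->
  f y <= sumZ a b f.
Proof.
  intros Hf Hy.
  replace (f y) with (sumZ a b (fun z => if Z.eqb z y then f z else 0)).
  - apply sumZ_le; intros z Hz; destruct (Z.eqb z y); [lra | auto].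
  - rewrite sumZ_delta; apply inI_spec in Hy; rewrite Hy; reflexivity.
Qed.

End SumZ.

(* The coefficient of t^n in e^(mu t) * sum_k u_k t^k / k!. *)
Definition exp_conv (mu : R) (u : nat -> R) (n : nat) : R :=
  sum_f_R0 (fun k => mu ^ (n - k) / INR (fact (n - k)) * (u k / INR (fact k))) n.

Lemma exp_conv_succ (mu : R) (u : nat -> R) n :
  INR (S n) * exp_conv mu u (S n) = exp_conv mu (fun k => u (S k)) n + mu * exp_conv mu u n.
Proof.
  unfold exp_conv.
  set (X := fun k => mu ^ (S n - k) / INR (fact (S n - k)) * (u k / INR (fact k))).
  rewrite (scal_sum _ _ (INR (S n))).
  rewrite (sum_eq _ (fun k => INR k * X k + INR (S n - k) * X k)).
  2:{ intros k Hk. rewrite <- Rmult_plus_distr_r, <- plus_INR.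
      replace (k + (S n - k))%nat with (S n) by lia. ring. }
  rewrite plus_sum, (decomp_sum (fun k => INR k * X k)), tech5 by lia.
  rewrite Nat.sub_diag, Rmult_0_l, Rmult_0_l, Rplus_0_l, Rplus_0_r; simpl Nat.pred.
  rewrite scal_sum; f_equal; apply sum_eq; intros k Hk; unfold X.
  - replace (S n - S k)%nat with (n - k)%nat by lia.
    rewrite fact_simpl, mult_INR.
    field; repeat split; first [apply INR_fact_neq_0 | apply not_0_INR; lia].
  - replace (S n - k)%nat with (S (n - k)) by lia.
    rewrite fact_simpl, mult_INR; simpl pow.
    field; repeat split; first [apply INR_fact_neq_0 | apply not_0_INR; lia].
Qed.

Lemma exp_is_series x : is_series (fun k => x ^ k / INR (fact k)) (exp x).
Proof.
  apply (is_series_ext (fun k => / INR (fact k) * x ^ k)); [intros; apply Rmult_comm|].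
  apply is_pseries_R, is_exp_Reals.
Qed.

Lemma is_series_exp_conv (mu t lam : R) (u : nat -> R) :
  (forall k, Rabs (u k) <= lam ^ k) ->
  is_series (fun n => t ^ n * exp_conv mu u n)
    (Series (fun k => t ^ k * (u k / INR (fact k))) * exp (mu * t)).
Proof.
  intros Hu.
  set (a := fun k => t ^ k * (u k / INR (fact k))).
  set (e := fun k => (mu * t) ^ k / INR (fact k)).
  assert (Habs_a : ex_series (fun k => Rabs (a k))).
  { apply (@ex_series_le R_AbsRing R_CompleteNormedModule _
             (fun k => (lam * Rabs t) ^ k / INR (fact k))).
    - intros k; change norm with Rabs; rewrite Rabs_Rabsolu; unfold a, Rdiv.
      rewrite !Rabs_mult, Rabs_inv, <- RPow_abs, Rpow_mult_distr.
      rewrite (Rabs_pos_eq (INR (fact k))) by apply pos_INR.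
      rewrite <- Rmult_assoc, (Rmult_comm (Rabs t ^ k)).
      apply Rmult_le_compat_r; [left; apply Rinv_0_lt_compat, INR_fact_lt_0|].
      apply Rmult_le_compat_r; [apply pow_le, Rabs_pos | apply Hu].
    - eexists; apply exp_is_series. }
  assert (Habs_e : ex_series (fun k => Rabs (e k))).
  { eexists; apply (is_series_ext (fun k => (Rabs mu * Rabs t) ^ k / INR (fact k)));
      [|apply exp_is_series].
    intros k; unfold e, Rdiv.
    rewrite Rabs_mult, Rabs_inv, <- RPow_abs, Rabs_mult, (Rabs_pos_eq (INR (fact k)))
      by apply pos_INR.
    reflexivity. }
  apply (is_series_ext (fun n => sum_f_R0 (fun k => a k * e (n - k)%nat) n)).
  - intros n; unfold exp_conv; rewrite scal_sum; apply sum_eq; intros k Hk; unfold a, e.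
    replace (t ^ n) with (t ^ k * t ^ (n - k)) by (rewrite <- pow_add; f_equal; lia).
    rewrite Rpow_mult_distr; field; split; apply INR_fact_neq_0.
  - apply is_series_mult; [apply Series_correct, ex_series_Rabs | apply exp_is_series | |];
      assumption.
Qed.

Lemma is_series_exp_derivative (t lam : R) :
  is_series (fun k => t ^ k * (INR k * lam ^ pred k / INR (fact k))) (exp (lam * t) * t).
Proof.
  apply is_series_decr_1.
  replace (plus _ _) with (exp (lam * t) * t)
    by (simpl; unfold plus, opp; simpl; unfold Rdiv;
        rewrite !Rmult_0_l, Rmult_0_r, Ropp_0, Rplus_0_r; reflexivity).
  assert (Hterm : forall k, (lam * t) ^ k / INR (fact k) * t =
                           t ^ S k * (INR (S k) * lam ^ pred (S k) / INR (fact (S k)))).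
  { intros k; simpl pred; rewrite fact_simpl, mult_INR, Rpow_mult_distr; simpl pow.
    field; split; [apply INR_fact_neq_0 | apply not_0_INR; lia]. }
  exact (is_series_ext _ _ _ Hterm (is_series_scal_r t _ _ (exp_is_series (lam * t)))).
Qed.

Fixpoint opow (Op : (Z -> R) -> Z -> R) (n : nat) (f : Z -> R) : Z -> R :=
  match n with O => f | S m => Op (opow Op m f) end.

Definition shift (mu : R) (Op : (Z -> R) -> Z -> R) (f : Z -> R) (z : Z) : R :=
  Op f z + mu * f z.

Section Operators.
Variables a b : Z.

Definition eq_on (f g : Z -> R) := forall z, (a <= z <= b)%Z -> f z = g z.
Definition le_on (f g : Z -> R) := forall z, (a <= z <= b)%Z -> f z <= g z.

Definition op_ext (Op : (Z -> R) -> Z -> R) :=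
  forall f g, eq_on f g -> eq_on (Op f) (Op g).
Definition op_linear (Op : (Z -> R) -> Z -> R) :=
  forall f g c d, eq_on (Op (fun z => c * f z + d * g z)) (fun z => c * Op f z + d * Op g z).
Definition op_positive (Op : (Z -> R) -> Z -> R) :=
  forall f, le_on (fun _ => 0) f -> le_on (fun _ => 0) (Op f).

Lemma op_monotone Op : op_linear Op -> op_positive Op ->
  forall f g, le_on f g -> le_on (Op f) (Op g).
Proof.
  intros Hlin Hpos f g Hfg z Hz.
  enough (0 <= Op (fun y => 1 * g y + (-1) * f y) z) by (rewrite Hlin in * by auto; lra).
  apply Hpos; auto; intros y Hy; specialize (Hfg y Hy); lra.
Qed.

Lemma opow_ext Op n : op_ext Op -> op_ext (opow Op n).
Proof.
  intros Hext; induction n as [|n IH]; intros f g E; simpl; [exact E | apply Hext, IH, E].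
Qed.

Lemma opow_comm Op n f : op_ext Op -> eq_on (opow Op n (Op f)) (Op (opow Op n f)).
Proof.
  intros Hext; induction n as [|n IH]; simpl; [intros z _; reflexivity | apply Hext, IH].
Qed.

Lemma opow_congr Op Op' n f : op_ext Op -> (forall g, eq_on (Op g) (Op' g)) ->
  eq_on (opow Op n f) (opow Op' n f).
Proof.
  intros Hext E; induction n as [|n IH]; intros z Hz; simpl; [reflexivity|].
  rewrite (Hext _ _ IH z Hz); apply E, Hz.
Qed.

Lemma opow_linear Op n : op_ext Op -> op_linear Op -> op_linear (opow Op n).
Proof.
  intros Hext Hlin; induction n as [|n IH]; intros f g c d z Hz; simpl; [reflexivity|].
  rewrite (Hext _ _ (IH f g c d) z Hz); apply Hlin, Hz.
Qed.

Lemma opow_positive Op n : op_positive Op -> op_positive (opow Op n).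
Proof.
  intros Hpos; induction n as [|n IH]; intros f Hf; simpl; [exact Hf | apply Hpos, IH, Hf].
Qed.

Lemma opow_monotone Op n : op_ext Op -> op_linear Op -> op_positive Op ->
  forall f g, le_on f g -> le_on (opow Op n f) (opow Op n g).
Proof.
  intros Hext Hlin Hpos; apply op_monotone; [apply opow_linear | apply opow_positive]; assumption.
Qed.

Section Shift.
Variable Op : (Z -> R) -> Z -> R.
Hypothesis Op_ext : op_ext Op.
Hypothesis Op_linear : op_linear Op.

Lemma shift_ext mu : op_ext (shift mu Op).
Proof. intros f g E z Hz; unfold shift; rewrite (Op_ext _ _ E), E by auto; reflexivity. Qed.

Lemma shift_linear mu : op_linear (shift mu Op).
Proof. intros f g c d z Hz; unfold shift; rewrite Op_linear by auto; ring. Qed.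

Lemma opow_shift_exp_conv mu n f :
  eq_on (fun z => opow (shift mu Op) n f z / INR (fact n))
        (fun z => exp_conv mu (fun k => opow Op k f z) n).
Proof.
  revert f; induction n as [|n IH]; intros f z Hz.
  - unfold exp_conv; simpl; field.
  - assert (Hstep : opow (shift mu Op) (S n) f z =
                    1 * opow (shift mu Op) n (Op f) z + mu * opow (shift mu Op) n f z).
    { transitivity (opow (shift mu Op) n (shift mu Op f) z);
        [symmetry; apply (opow_comm _ _ _ (shift_ext mu) z Hz)|].
      rewrite <- (opow_linear _ _ (shift_ext mu) (shift_linear mu)) by exact Hz.
      apply opow_ext; [apply shift_ext | intros y _; unfold shift; ring | exact Hz]. }
    apply (Rmult_eq_reg_l (INR (S n))); [|apply not_0_INR; lia].
    rewrite exp_conv_succ, Hstep, fact_simpl, mult_INR.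
    rewrite <- (IH f z Hz).
    replace (exp_conv mu (fun k => opow Op (S k) f z) n)
      with (opow (shift mu Op) n (Op f) z / INR (fact n)).
    + field; split; [apply INR_fact_neq_0 | apply not_0_INR; lia].
    + rewrite (IH (Op f) z Hz); unfold exp_conv; apply sum_eq; intros k _.
      rewrite (opow_comm _ _ _ Op_ext z Hz); reflexivity.
Qed.

Variable lam : R.
Hypothesis Op_const : forall c, eq_on (Op (fun _ => c)) (fun _ => 0).

Lemma opow_shift_const n c : eq_on (opow (shift lam Op) n (fun _ => c)) (fun _ => lam ^ n * c).
Proof.
  induction n as [|n IH]; intros z Hz; simpl; [ring|].
  rewrite (shift_ext lam _ _ IH z Hz); unfold shift; rewrite Op_const by exact Hz; ring.
Qed.

Hypothesis lam_ge0 : 0 <= lam.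
Hypothesis shift_positive : op_positive (shift lam Op).

Lemma opow_shift_lyapunov phi G : le_on (Op phi) (fun _ => G) ->
  forall k, le_on (opow (shift lam Op) k phi)
                  (fun z => lam ^ k * phi z + INR k * lam ^ pred k * G).
Proof.
  intros HG k; induction k as [|k IH]; intros z Hz; simpl opow; [simpl; lra|].
  set (K := INR k * lam ^ pred k * G).
  eapply Rle_trans.
  { apply (op_monotone _ (shift_linear lam) shift_positive _
             (fun y => lam ^ k * phi y + K * (fun _ => 1) y)); [|exact Hz].
    intros y Hy; rewrite Rmult_1_r; apply IH, Hy. }
  rewrite (shift_linear lam) by exact Hz; unfold shift; rewrite Op_const by exact Hz.
  assert (HKlam : K * lam = INR k * lam ^ k * G) by (unfold K; destruct k; simpl; ring).
  assert (lam ^ k * Op phi z <= lam ^ k * G).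
  { apply Rmult_le_compat_l; [apply pow_le, lam_ge0 | apply HG, Hz]. }
  rewrite S_INR; simpl pred; simpl pow; lra.
Qed.
End Shift.
End Operators.

Section Generator.
Variables (a b : Z) (sigma : Z -> R) (absorb : Z -> bool).

Definition genop (f : Z -> R) (y : Z) : R :=
  sumZ a b (fun z => gen a b sigma absorb y z * f z).

Definition absorb_ind (y : Z) : R := if absorb y then 1 else 0.

Lemma genop_ext : op_ext a b genop.
Proof. intros f g E y _; apply sumZ_ext; intros z Hz; rewrite E by exact Hz; reflexivity. Qed.

Lemma genop_linear : op_linear a b genop.
Proof.
  intros f g c d y _; unfold genop.
  rewrite <- !sumZ_scal, <- sumZ_plus; apply sumZ_ext; intros; ring.
Qed.

Lemma genop_eq f y : (a <= y <= b)%Z ->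
  genop f y =
  if absorb y then 0 else
    ((if inI a b (y - 1) then f (y - 1)%Z - f y else 0) +
     (if inI a b (y + 1) then f (y + 1)%Z - f y else 0)) / (2 * sigma y).
Proof.
  intros Hy; unfold genop.
  destruct (absorb y) eqn:Ha.
  - rewrite (sumZ_ext _ _ _ (fun z => 0 * f z)), sumZ_scal; [ring|].
    intros z _; unfold gen; rewrite Ha; reflexivity.
  - set (s := / (2 * sigma y)).
    set (nL := if inI a b (y - 1) then 1 else 0).
    set (nR := if inI a b (y + 1) then 1 else 0).
    rewrite (sumZ_ext _ _ _ (fun z =>
        (if Z.eqb z (y - 1) then s * f z else 0) +
        (if Z.eqb z (y + 1) then s * f z else 0) +
        (if Z.eqb z y then - (nL + nR) * s * f z else 0))).
    + rewrite !sumZ_plus, !sumZ_delta.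
      apply inI_spec in Hy; rewrite Hy; unfold nL, nR, s.
      destruct (inI a b (y - 1)), (inI a b (y + 1)); unfold Rdiv; ring.
    + intros z Hz; unfold gen; rewrite Ha.
      apply inI_spec in Hz; rewrite Hz; simpl; fold nL nR.
      destruct (Z.eqb_spec z (y - 1)), (Z.eqb_spec z (y + 1)), (Z.eqb_spec z y),
        (Z.eqb_spec (Z.abs (y - z)) 1), (Z.eqb_spec y z); try lia; unfold s, Rdiv; ring.
Qed.

Lemma genop_const c : eq_on a b (genop (fun _ => c)) (fun _ => 0).
Proof.
  intros y Hy; rewrite genop_eq by exact Hy.
  destruct (absorb y), (inI a b (y - 1)), (inI a b (y + 1)); unfold Rdiv; ring.
Qed.

Lemma sumZ_genpow n x f : (a <= x <= b)%Z ->
  sumZ a b (fun y => genpow a b sigma absorb n x y * f y) = opow genop n f x.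
Proof.
  revert x f; induction n as [|n IH]; intros x f Hx; simpl.
  - rewrite (sumZ_ext _ _ _ (fun y => if Z.eqb y x then f y else 0)), sumZ_delta.
    + apply inI_spec in Hx; rewrite Hx; reflexivity.
    + intros y _; destruct (Z.eqb_spec x y), (Z.eqb_spec y x); subst; try lia; ring.
  - rewrite (sumZ_ext _ _ _ (fun y => sumZ a b (fun z =>
               gen a b sigma absorb x z * (genpow a b sigma absorb n z y * f y)))).
    + rewrite sumZ_swap; apply sumZ_ext; intros z Hz.
      rewrite sumZ_scal, IH by exact Hz; reflexivity.
    + intros y _; rewrite Rmult_comm, <- sumZ_scal; apply sumZ_ext; intros; ring.
Qed.

Hypothesis sigma_pos : forall y, (a <= y <= b)%Z -> 0 < sigma y.

Section Uniformization.
Variable lam : R.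
Hypothesis inv_sigma_le : forall y, (a <= y <= b)%Z -> / sigma y <= lam.

Lemma uniformization_rate_ge0 x : (a <= x <= b)%Z -> 0 <= lam.
Proof.
  intros Hx; specialize (inv_sigma_le x Hx).
  assert (0 < / sigma x) by apply Rinv_0_lt_compat, sigma_pos, Hx; lra.
Qed.

Lemma shift_genop_positive : op_positive a b (shift lam genop).
Proof.
  intros f Hf y Hy; unfold shift; rewrite genop_eq by exact Hy.
  assert (Hs : 0 < / (2 * sigma y)) by (apply Rinv_0_lt_compat; specialize (sigma_pos y Hy); lra).
  assert (H2s : 2 * / (2 * sigma y) <= lam)
    by (rewrite Rinv_mult; specialize (inv_sigma_le y Hy); lra).
  assert (Hfy := Hf y Hy).
  assert (Hnb : forall w, 0 <= (if inI a b w then f w else 0) * / (2 * sigma y)).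
  { intros w; apply Rmult_le_pos; [|lra].
    destruct (inI a b w) eqn:Hw; [apply inI_spec in Hw; apply Hf, Hw | lra]. }
  assert (H0 := Hnb (y - 1)%Z); assert (H1 := Hnb (y + 1)%Z).
  destruct (absorb y); [simpl; nra|].
  destruct (inI a b (y - 1)), (inI a b (y + 1)); simpl in *; unfold Rdiv; nra.
Qed.

Let B := shift lam genop.
Let B_ext : op_ext a b B := shift_ext a b genop genop_ext lam.
Let B_linear : op_linear a b B := shift_linear a b genop genop_linear lam.

Lemma opow_shift_absorb_ind_bounds x k : (a <= x <= b)%Z ->
  0 <= opow B k absorb_ind x <= lam ^ k.
Proof.
  intros Hx; rewrite <- (Rmult_1_r (lam ^ k)), <- (Rmult_0_r (lam ^ k)) at 1.
  rewrite <- !(opow_shift_const _ _ _ genop_ext lam genop_const k _ x Hx).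
  split; apply (opow_monotone _ _ _ _ B_ext B_linear shift_genop_positive); try exact Hx;
    intros y _; unfold absorb_ind; destruct (absorb y); lra.
Qed.

Lemma hit_prob_uniformized x t : (a <= x <= b)%Z ->
  hit_prob a b sigma absorb t x
    (Series (fun k => t ^ k * (opow B k absorb_ind x / INR (fact k))) * exp (- lam * t)).
Proof.
  intros Hx; unfold hit_prob; apply is_series_Reals.
  assert (Hterm : forall n, t ^ n * exp_conv (- lam) (fun k => opow B k absorb_ind x) n =
    t ^ n / INR (fact n) *
    sumZ a b (fun y => if absorb y then genpow a b sigma absorb n x y else 0)).
  { intros n.
    rewrite (sumZ_ext _ _ _ (fun y => genpow a b sigma absorb n x y * absorb_ind y))
      by (intros y _; unfold absorb_ind; destruct (absorb y); ring).
    rewrite sumZ_genpow by exact Hx.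
    rewrite (opow_congr _ _ _ (shift (- lam) B) n absorb_ind genop_ext)
      by (exact Hx || (intros g y _; unfold B, shift; ring)).
    rewrite <- (opow_shift_exp_conv _ _ _ B_ext B_linear (- lam) n absorb_ind x Hx).
    unfold Rdiv; ring. }
  apply (is_series_ext _ _ _ Hterm), (is_series_exp_conv _ _ lam).
  intros k; rewrite Rabs_pos_eq; apply opow_shift_absorb_ind_bounds, Hx.
Qed.

Lemma opow_shift_absorb_ind_lyapunov x phi c G k :
  (a <= x <= b)%Z ->
  le_on a b (fun _ => 0) phi ->
  (forall y, (a <= y <= b)%Z -> absorb y = true -> c <= phi y) ->
  le_on a b (genop phi) (fun _ => G) ->
  phi x = 0 ->
  c * opow B k absorb_ind x <= INR k * lam ^ pred k * G.
Proof.
  intros Hx Hphi0 HphiA HG Hphix.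
  rewrite <- (Rplus_0_r (c * _)), <- (Rmult_0_l (opow B k absorb_ind x)).
  rewrite <- (opow_linear _ _ _ _ B_ext B_linear) by exact Hx.
  eapply Rle_trans.
  { apply (opow_monotone _ _ _ _ B_ext B_linear shift_genop_positive _ phi); [|exact Hx].
    intros y Hy; unfold absorb_ind; destruct (absorb y) eqn:Hay.
    - specialize (HphiA y Hy Hay); lra.
    - specialize (Hphi0 y Hy); simpl in Hphi0; lra. }
  eapply Rle_trans.
  { apply (opow_shift_lyapunov _ _ _ genop_linear lam genop_const
             (uniformization_rate_ge0 x Hx) shift_genop_positive _ _ HG k x Hx). }
  rewrite Hphix; lra.
Qed.

End Uniformization.

Lemma hit_prob_lyapunov x t phi c G :
  (a <= x <= b)%Z -> 0 <= t -> 0 < c ->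
  le_on a b (fun _ => 0) phi ->
  (forall y, (a <= y <= b)%Z -> absorb y = true -> c <= phi y) ->
  le_on a b (genop phi) (fun _ => G) ->
  phi x = 0 ->
  exists l, hit_prob a b sigma absorb t x l /\ l <= t * G / c.
Proof.
  intros Hx Ht Hc Hphi0 HphiA HG Hphix.
  set (lam := sumZ a b (fun y => / sigma y)).
  assert (Hlam : forall y, (a <= y <= b)%Z -> / sigma y <= lam).
  { intros y Hy; apply (sumZ_ge_term a b (fun z => / sigma z)); [|exact Hy].
    intros z Hz; left; apply Rinv_0_lt_compat, sigma_pos, Hz. }
  set (u := fun k => opow (shift lam genop) k absorb_ind x).
  set (V := Series (fun k => t ^ k * (u k / INR (fact k)))).
  exists (V * exp (- lam * t)); split; [apply hit_prob_uniformized; assumption|].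
  assert (HV : c * V <= exp (lam * t) * t * G).
  { assert (HS := is_series_scal_r G _ _ (is_series_exp_derivative t lam)).
    unfold V; rewrite <- Series_scal_l, <- (is_series_unique _ _ HS).
    apply Series_le; [intros k | eexists; exact HS].
    assert (Hw : 0 <= t ^ k / INR (fact k))
      by (apply Rdiv_le_0_compat; [apply pow_le, Ht | apply INR_fact_lt_0]).
    replace (c * _) with (t ^ k / INR (fact k) * (c * u k)) by (unfold Rdiv; ring).
    replace (_ * G) with (t ^ k / INR (fact k) * (INR k * lam ^ pred k * G)) by (unfold Rdiv; ring).
    split; [apply Rmult_le_pos, Rmult_le_pos | apply Rmult_le_compat_l]; try lra.
    - apply (opow_shift_absorb_ind_bounds lam Hlam x k Hx).
    - apply (opow_shift_absorb_ind_lyapunov lam Hlam x phi); assumption. }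
  assert (Hexp : exp (- lam * t) * exp (lam * t) = 1)
    by (rewrite <- exp_plus, <- exp_0; f_equal; ring).
  assert (0 < exp (- lam * t)) by apply exp_pos.
  apply (Rmult_le_reg_l c); [exact Hc|].
  replace (c * (t * G / c)) with (t * G * (exp (- lam * t) * exp (lam * t)))
    by (rewrite Hexp; field; lra).
  nra.
Qed.

End Generator.

Lemma genop_ramp_le (a b z : Z) (sigma : Z -> R) :
  (a <= z < b)%Z -> (forall y, (a <= y <= b)%Z -> 0 < sigma y) ->
  le_on a b (genop a b sigma (at_b b) (fun w => IZR (Z.max (w - z) 0)))
            (fun _ => / (2 * sigma z)).
Proof.
  intros Hz Hsig y Hy; rewrite genop_eq by exact Hy; unfold at_b.
  assert (Hsz : 0 < / (2 * sigma z))
    by (apply Rinv_0_lt_compat; specialize (Hsig z ltac:(lia)); lra).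
  destruct (Z.eqb_spec y b) as [_|Hyb]; [lra|].
  assert (Hy1 : inI a b (y + 1) = true) by (apply inI_spec; lia); rewrite Hy1.
  destruct (Z.eqb_spec y z) as [->|Hyz].
  - rewrite (Z.max_r (z - 1 - z)), (Z.max_r (z - z)), (Z.max_l (z + 1 - z)) by lia.
    replace (z + 1 - z)%Z with 1%Z by lia.
    destruct (inI a b (z - 1)); unfold Rdiv; lra.
  - assert (Hs : 0 < / (2 * sigma y)) by (apply Rinv_0_lt_compat; specialize (Hsig y Hy); lra).
    enough (Hnum : (if inI a b (y - 1) then IZR (Z.max (y - 1 - z) 0) - IZR (Z.max (y - z) 0)
                    else 0) + (IZR (Z.max (y + 1 - z) 0) - IZR (Z.max (y - z) 0)) <= 0)
      by (unfold Rdiv; nra).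
    destruct (Z.lt_ge_cases y z).
    + rewrite !Z.max_r by lia; destruct (inI a b (y - 1)); lra.
    + assert (Hy0 : inI a b (y - 1) = true) by (apply inI_spec; lia); rewrite Hy0.
      rewrite !Z.max_l by lia; rewrite !minus_IZR, plus_IZR; lra.
Qed.

Lemma genop_dist_le (a b x : Z) (sigma : Z -> R) :
  (a < x < b)%Z -> (forall y, (a <= y <= b)%Z -> 0 < sigma y) ->
  le_on a b (genop a b sigma (at_ab a b) (fun w => IZR (Z.abs (w - x))))
            (fun _ => / sigma x).
Proof.
  intros Hx Hsig y Hy; rewrite genop_eq by exact Hy; unfold at_ab.
  assert (Hsx : 0 < sigma x) by (apply Hsig; lia).
  assert (0 < / sigma x) by (apply Rinv_0_lt_compat, Hsx).
  destruct (Z.eqb_spec y a), (Z.eqb_spec y b); simpl; try lra.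
  assert (Hy0 : inI a b (y - 1) = true) by (apply inI_spec; lia); rewrite Hy0.
  assert (Hy1 : inI a b (y + 1) = true) by (apply inI_spec; lia); rewrite Hy1.
  destruct (Z.lt_total y x) as [Hyx|[->|Hyx]].
  - rewrite !Z.abs_neq by lia; rewrite !opp_IZR, !minus_IZR, plus_IZR.
    assert (0 < / (2 * sigma y)) by (apply Rinv_0_lt_compat; specialize (Hsig y Hy); lra).
    unfold Rdiv; nra.
  - rewrite Z.sub_diag; replace (x - 1 - x)%Z with (-1)%Z by lia.
    replace (x + 1 - x)%Z with 1%Z by lia.
    simpl; right; field; lra.
  - rewrite !Z.abs_eq by lia; rewrite !minus_IZR, plus_IZR.
    assert (0 < / (2 * sigma y)) by (apply Rinv_0_lt_compat; specialize (Hsig y Hy); lra).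
    unfold Rdiv; nra.
Qed.

Lemma hit_prob_at_b_le (a b : Z) (sigma : Z -> R) x z t :
  (forall y, (a <= y <= b)%Z -> 0 < sigma y) ->
  (a <= x)%Z -> (x <= z < b)%Z -> 0 <= t ->
  exists l, hit_prob a b sigma (at_b b) t x l /\ l <= t / (2 * IZR (b - z) * sigma z).
Proof.
  intros Hsig Hax Hz Ht.
  assert (Hsz : 0 < sigma z) by (apply Hsig; lia).
  assert (Hc : 0 < IZR (b - z)) by (apply IZR_lt; lia).
  destruct (hit_prob_lyapunov a b sigma (at_b b) Hsig x t (fun w => IZR (Z.max (w - z) 0))
              (IZR (b - z)) (/ (2 * sigma z))) as [l [Hl Hle]]; try lia; try assumption.
  - intros y Hy; apply IZR_le; lia.
  - intros y Hy Hyb; unfold at_b in Hyb; apply Z.eqb_eq in Hyb; subst y.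
    rewrite Z.max_l by lia; lra.
  - apply genop_ramp_le; [lia | exact Hsig].
  - rewrite Z.max_r by lia; reflexivity.
  - exists l; split; [exact Hl|].
    apply (Rle_trans _ _ _ Hle); right; field; lra.
Qed.

Lemma hit_prob_at_ab_le (a b : Z) (sigma : Z -> R) x t :
  (forall y, (a <= y <= b)%Z -> 0 < sigma y) ->
  (a < x < b)%Z -> 0 <= t ->
  exists l, hit_prob a b sigma (at_ab a b) t x l /\
    l <= t / (IZR (Z.min (x - a) (b - x)) * sigma x).
Proof.
  intros Hsig Hx Ht.
  assert (Hsx : 0 < sigma x) by (apply Hsig; lia).
  assert (Hc : 0 < IZR (Z.min (x - a) (b - x))) by (apply IZR_lt; lia).
  destruct (hit_prob_lyapunov a b sigma (at_ab a b) Hsig x t (fun w => IZR (Z.abs (w - x)))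
              (IZR (Z.min (x - a) (b - x))) (/ sigma x)) as [l [Hl Hle]]; try lia; try assumption.
  - intros y Hy; apply IZR_le; lia.
  - intros y Hy Hyab; apply IZR_le; unfold at_ab in Hyab.
    destruct (Z.eqb_spec y a), (Z.eqb_spec y b); simpl in Hyab; try discriminate; lia.
  - apply genop_dist_le; [lia | exact Hsig].
  - rewrite Z.sub_diag; reflexivity.
  - exists l; split; [exact Hl|].
    apply (Rle_trans _ _ _ Hle); right; field; lra.
Qed.

Theorem proposition2p2 (a b : Z) (sigma : Z -> R)
  (Hab : (a < b)%Z)
  (Hsig : forall x : Z, (a <= x <= b)%Z -> 0 < sigma x) :
  (forall (x z : Z) (t : R), (a <= x < b)%Z -> (x <= z < b)%Z -> 0 < t ->
     exists l, hit_prob a b sigma (at_b b) t x l /\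
       l <= t / (2 * IZR (b - z) * sigma z))
  /\
  (forall (x : Z) (t : R), (a < x < b)%Z -> 0 < t ->
     exists l, hit_prob a b sigma (at_ab a b) t x l /\
       l <= t / (IZR (Z.min (x - a) (b - x)) * sigma x)).
Proof.
  split.
  - intros x z t Hx Hz Ht; apply hit_prob_at_b_le; [exact Hsig | lia | exact Hz | lra].
  - intros x t Hx Ht; apply hit_prob_at_ab_le; [exact Hsig | exact Hx | lra].
Qed.
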